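(* Let $K$ be a Cantor set, let $T:K\to K$ be an endomorphism, and let $K_1,\dots,K_N$ be pairwise disjoint Cantor sets with $K=\bigcup_{i=1}^N K_i$. Then there exists an endomorphism $\widetilde T:K\to K$ such that for every $x\in K$ and every $1\le i\le N$, $\widetilde T(x)\in K_i$ if and only if $T(x)\in K_i$, and the orbit of every point of $K$ under $\widetilde T$ is finally periodic.
   Context: A Cantor set is a nonempty totally disconnected, perfect, compact metric space. An endomorphism of $K$ is a continuous surjection $K\to K$. The orbit of $x$ under a map $S$ is finally periodic if there exist integers $j,M>0$ with $S^{M+j}(x)=S^{j}(x)$. *)

From HB Require Import structures.
From mathcomp Require Import all_boot all_order all_algebra.
From mathcomp Require Import all_classical all_reals all_analysis.
Set Implicit Arguments. Unset Strict Implicit. Unset Printing Implicit Defensive.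
Import Order.TTheory GRing.Theory Num.Theory.
Local Open Scope classical_set_scope.

(* A Cantor set: a nonempty, totally disconnected, perfect, compact subset
   of a metric space (metric = pseudometric + Hausdorff, required separately). *)
Definition is_cantor_set {T : topologicalType} (A : set T) : Prop :=
  [/\ A !=set0, totally_disconnected A, perfect_set A & compact A].

Definition endomorphism {T : topologicalType} (f : T -> T) : Prop :=
  continuous f /\ (forall y : T, exists x : T, f x = y).

Definition finally_periodic {T : Type} (S : T -> T) (x : T) : Prop :=
  exists j M : nat, (0 < j)%N /\ (0 < M)%N /\ iter (M + j) S x = iter j S x.

From HB Require Import structures.
From mathcomp Require Import all_boot all_order all_algebra.
From mathcomp Require Import all_classical all_reals all_analysis.
From mathcomp Require Import finmap.
Set Implicit Arguments. Unset Strict Implicit. Unset Printing Implicit Defensive.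
Local Open Scope classical_set_scope.

(* A compact totally disconnected metric space is zero-dimensional (its
   quasi-components are connected), so K is homeomorphic to the Cantor space
   2^N.  There the partition {K_i} is read through two locally constant
   colourings, a := (index of the piece containing T x) and b := (index of the
   piece containing x), and it suffices to build a continuous surjection S with
   b (S x) = a x whose orbits are all finally periodic.  Fix for every colour i
   a cylinder [z_i | L_i] on which a = i and b is constant, and a point e_i of
   b-colour i.  S drops the first L_i digits of a point x of a-colour i if x
   lies in that cylinder and the result has b-colour i, and sends x to e_i
   otherwise; surjectivity comes from prepending z_i.  An orbit that is shifted
   forever has its colour sequence determined backwards by i |-> b z_i on a
   finite set, hence periodic, and the colours determine the orbit; any other
   orbit returns infinitely often to the finitely many points e_i. *)

Section QuasiComponent.
Context {R : realType} {T : pseudoPMetricType R}.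

Definition quasi_component (x : T) :=
  \bigcap_(C in [set C : set T | clopen C /\ C x]) C.

Lemma quasi_component_refl x : quasi_component x x.
Proof. by move=> C []. Qed.

Lemma closed_quasi_component x : closed (quasi_component x).
Proof.
rewrite -[quasi_component x]setCK; apply: open_closedC; rewrite setC_bigcap.
by apply: bigcup_open => C [[_ cC] _]; exact: closed_openC.
Qed.

Hypothesis cT : compact [set: T].

Lemma quasi_component_clopen_subset x U : open U -> quasi_component x `<=` U ->
  exists C, [/\ clopen C, C x & C `<=` U].
Proof.
move=> oU QU.
have : cover_compact (~` U).
  rewrite -compact_cover; apply: subclosed_compact cT _ => //.
  exact: open_closedC.
move=> /(_ _ [set C | clopen C /\ C x] setC).
case=> [C [[_ cC] _]|y nUy|D DC nUD]; first exact: closed_openC.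
  apply: contrapT => ncov; apply/nUy/QU => C Cx.
  by apply: contrapT => nCy; apply: ncov; exists C.
have {}DC C : C \in D -> clopen C /\ C x by move=> /DC /set_mem.
exists (\big[setI/setT]_(C <- D) C); split.
- rewrite big_seq; apply: big_ind; [exact: clopenT|exact: clopenI|].
  by move=> C /DC [].
- by rewrite -bigcap_fset => C /DC [].
- move=> y Dy; apply: contrapT => /nUD [C DCC]; apply.
  by move: Dy; rewrite -bigcap_fset; apply.
Qed.

Lemma quasi_component_split x X1 X2 : closed X1 -> closed X2 ->
  X1 `&` X2 = set0 -> quasi_component x `<=` X1 `|` X2 ->
  quasi_component x `<=` X1 \/ quasi_component x `<=` X2.
Proof.
move=> cX1 cX2 X12 QX.
have [U [V [oU oV X1U X2V UV]]] :=
  (@normal_openP R T).1 pseudometric_normal X1 X2 cX1 cX2 X12.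
have [C [[oC cC] Cx CUV]] := quasi_component_clopen_subset (openU oU oV)
  (subset_trans QX (setUSS X1U X2V)).
(* C `&` W = C `\` W' is a clopen neighbourhood of x. *)
have QW W W' : open W -> open W' -> W `&` W' = set0 -> C `<=` W `|` W' ->
    W x -> quasi_component x `<=` W.
  move=> oW oW' WW' CW Wx y Qy.
  suff [] : (C `&` W) y by [].
  apply: Qy; split=> //; split; first exact: openI.
  suff -> : C `&` W = C `&` ~` W' by apply: closedI => //; exact: open_closedC.
  apply/seteqP; split=> z [Cz Wz]; split=> //.
    by move=> W'z; have : (W `&` W') z by []; rewrite WW'.
  by case: (CW _ Cz).
have UV_disj y : U y -> V y -> False.
  by move=> Uy Vy; have : (U `&` V) y by []; rewrite UV.
case: (CUV _ Cx) => [Ux|Vx]; [left|right] => y Qy; case: (QX _ Qy) => // Xy.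
- by case: (UV_disj y); [exact: QW U V oU oV UV CUV Ux _ Qy|exact: X2V].
- have VU : V `&` U = set0 by rewrite setIC.
  have CVU : C `<=` V `|` U by rewrite setUC.
  by case: (UV_disj y); [exact: X1U|exact: QW V U oV oU VU CVU Vx _ Qy].
Qed.

Lemma connected_quasi_component x : connected (quasi_component x).
Proof.
move=> B [b Bb] [C oC BQC] [E cE BQE].
have cB : closed B.
  by rewrite BQE; apply: closedI => //; exact: closed_quasi_component.
have cQC : closed (quasi_component x `&` ~` C).
  by apply: closedI; [exact: closed_quasi_component|exact: open_closedC].
have BC : B `<=` C by rewrite BQC => y [].
have B_QC : B `&` (quasi_component x `&` ~` C) = set0.
  by apply/seteqP; split=> // y [/BC Cy [_]].
have Q_BQC : quasi_component x `<=` B `|` (quasi_component x `&` ~` C).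
  move=> y Qy; have [Cy|nCy] := pselect (C y); last by right.
  by left; rewrite BQC.
case: (quasi_component_split cB cQC B_QC Q_BQC) => [QB|QnC].
  by apply/seteqP; split=> // y; rewrite BQC => -[].
have [Qb Cb] : quasi_component x b /\ C b by move: Bb; rewrite BQC.
by have [_] := QnC b Qb.
Qed.

Lemma totally_disconnected_zero_dimensional :
  totally_disconnected [set: T] -> zero_dimensional T.
Proof.
move=> tdT x y /eqP xy; apply: contrapT => nsep.
have Qy : quasi_component x y.
  by move=> C [clC Cx]; apply: contrapT => nCy; apply: nsep; exists C.
have := connected_component_max (@quasi_component_refl x) (@subsetT _ _)
  (@connected_quasi_component x) Qy.
by rewrite tdT // => /esym.
Qed.

End QuasiComponent.

Definition locally_constant {T : topologicalType} {U : Type} (f : T -> U) :=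
  forall x, \forall y \near x, f y = f x.

Definition cylinder (n : nat) (x : cantor_space) : set cantor_space :=
  [set y | forall k, (k < n)%N -> y k = x k].

Definition shift (n : nat) (x : cantor_space) : cantor_space :=
  fun k => x (n + k)%N.

Definition prepend (n : nat) (z y : cantor_space) : cantor_space :=
  fun k => if (k < n)%N then z k else y (k - n)%N.

Lemma cylinder_le m n x : (m <= n)%N -> cylinder n x `<=` cylinder m x.
Proof. by move=> mn y xy k km; apply: xy; exact: leq_trans km mn. Qed.

Lemma cylinder_shift n m x y :
  cylinder (n + m) x y -> cylinder m (shift n x) (shift n y).
Proof. by move=> xy k km; rewrite /shift xy // ltn_add2l. Qed.

Lemma cylinder_prepend n z y : cylinder n z (prepend n z y).
Proof. by move=> k kn; rewrite /prepend kn. Qed.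

Lemma shift_prepend n z y : shift n (prepend n z y) = y.
Proof.
by apply: funext => k; rewrite /shift /prepend ltnNge leq_addr /= addKn.
Qed.

Lemma cylinder_nbhs n x : nbhs x (cylinder n x).
Proof.
elim: n => [|n IH]; first by apply: filterS filterT => y _ k.
have xn : nbhs x [set y : cantor_space | y n = x n].
  have xn1 : nbhs (x n) [set x n] by exact/principal_filterP.
  exact: (@proj_continuous nat (fun=> bool) n x _ xn1).
apply: filterS (filterI IH xn) => y [yx yn] k; rewrite ltnS leq_eqVlt.
by case/orP => [/eqP ->|]; [exact: yn|exact: yx].
Qed.

Lemma nbhs_cylinder x U : nbhs x U -> exists n, cylinder n x `<=` U.
Proof.
have cyl_filter : Filter (filter_from [set: nat] (cylinder^~ x)).
  apply: filter_from_filter; first by exists 0%N.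
  move=> i j _ _; exists (maxn i j) => //.
  by move=> y xy; split; apply: cylinder_le xy; rewrite ?leq_maxl ?leq_maxr.
have : filter_from [set: nat] (cylinder^~ x) --> x.
  apply/cvg_sup => k V [W] [[Q] oQ <-] Ox WV; apply: (filterS WV).
  by exists k.+1 => // y /= xy; rewrite xy.
by move=> /[apply] -[n _ nU]; exists n.
Qed.

Lemma locally_constant_cylinder {U : Type} (f : cantor_space -> U) x :
  locally_constant f -> exists n, forall y, cylinder n x y -> f y = f x.
Proof. by move=> /(_ x) /nbhs_cylinder [n nf]; exists n. Qed.

Lemma locally_constant_coord_continuous (T : topologicalType)
    (g : T -> cantor_space) :
  (forall k, locally_constant (fun x => g x k)) -> continuous g.
Proof.
move=> gk x; apply/cvg_sup => k U [V] [[W] oW <-] gxW VU; apply: (filterS VU).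
by apply: filterS (gk k x) => y /= ->.
Qed.

Lemma nat_pigeonhole (T : finType) (f : nat -> T) :
  exists a b, [/\ (a < b)%N, (b <= #|T|)%N & f a = f b].
Proof.
apply: contrapT => nrep.
have inj_f : injective (fun k : 'I_#|T|.+1 => f k).
  move=> k1 k2 fk; apply/val_inj; case: (ltngtP k1 k2) => // k12; exfalso.
    by apply: nrep; exists k1, k2; split; rewrite // -ltnS.
  by apply: nrep; exists k2, k1; split; rewrite // -ltnS.
by have := leq_card _ inj_f; rewrite card_ord ltnn.
Qed.

Lemma backward_orbit_periodic (T : finType) (p : T -> T) (i : nat -> T) :
  (forall n, p (i n.+1) = i n) ->
  exists2 d, (0 < d)%N & forall n, i (n + d)%N = i n.
Proof.
move=> pi.
have back m n : iter m p (i (n + m)%N) = i n.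
  by elim: m n => [|m IH] n; rewrite ?addn0 // iterSr addnS pi IH.
pose d := (#|T|)`!.
have fixed n : iter d p (i n) = i n.
  have [a [b [ab bT iab]]] := nat_pigeonhole (fun k => i (n + k)%N).
  have ret : iter (b - a) p (i (n + a)%N) = i (n + a)%N.
    have := back (b - a)%N (n + a)%N.
    by rewrite -addnA (subnKC (ltnW ab)) -iab.
  have [q ->] : exists q, d = (q * (b - a))%N.
    by apply/dvdnP/dvdn_fact; rewrite subn_gt0 ab (leq_trans (leq_subr _ _) bT).
  by rewrite -(back a n) -iterD addnC iterD iterM (iter_fix _ ret).
exists d => [|n]; first exact: fact_gt0.
by rewrite -(fixed (n + d)%N) back.
Qed.

Lemma finally_periodic_of_return (X : Type) (S : X -> X) x t M :
  (0 < M)%N -> iter M S (iter t S x) = iter t S x -> finally_periodic S x.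
Proof.
by move=> M0 ret; exists t.+1, M; split=> //; rewrite addnS !iterS iterD ret.
Qed.

Lemma finally_periodic_recurrent (X : Type) (E : finType) (e : E -> X)
    (S : X -> X) x :
  (forall t, exists t', (t < t')%N /\ exists j, iter t' S x = e j) ->
  finally_periodic S x.
Proof.
move=> /choice [next next_hit].
pose hit k := iter k.+1 next 0%N.
have hit_mono : {homo hit : k l / (k < l)%N}.
  apply: homo_ltn => [? ? ?|k]; first exact: ltn_trans.
  by have [] := next_hit (hit k).
have /choice [j hitj] k : exists j, iter (hit k) S x = e j.
  by have [] := next_hit (iter k next 0%N).
have [a [b [ab _ jab]]] := nat_pigeonhole j.
apply: (@finally_periodic_of_return _ _ _ (hit a) (hit b - hit a)).
  by rewrite subn_gt0 hit_mono.
by rewrite -iterD subnK ?hitj ?jab // ltnW // hit_mono.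
Qed.

Section ShiftOrReset.
Variables (N : nat) (a b : cantor_space -> 'I_N).
Hypotheses (a_loc : locally_constant a) (b_loc : locally_constant b).
Variables (z e : 'I_N -> cantor_space) (L : 'I_N -> nat).
Hypothesis L_gt0 : forall i, (0 < L i)%N.
Hypothesis a_cylinder : forall i y, cylinder (L i) (z i) y -> a y = i.
Hypothesis b_cylinder : forall i y, cylinder (L i) (z i) y -> b y = b (z i).
Hypothesis b_e : forall i, b (e i) = i.

Definition shiftable x :=
  cylinder (L (a x)) (z (a x)) x /\ b (shift (L (a x)) x) = a x.

Definition shift_or_reset x :=
  if `[< shiftable x >] then shift (L (a x)) x else e (a x).
Local Notation step := shift_or_reset.

Lemma colour_shift_or_reset x : b (step x) = a x.
Proof. by rewrite /shift_or_reset; case: asboolP => [[]|]. Qed.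

Lemma shift_or_reset_surj y : exists x, step x = y.
Proof.
pose i := b y; exists (prepend (L i) (z i) y).
have a_pre : a (prepend (L i) (z i) y) = i by apply/a_cylinder/cylinder_prepend.
rewrite /shift_or_reset a_pre shift_prepend; case: asboolP => // [[]].
by rewrite /shiftable a_pre shift_prepend; split=> //; exact: cylinder_prepend.
Qed.

Lemma shift_or_reset_continuous : continuous step.
Proof.
apply: locally_constant_coord_continuous => k x; set i := a x.
have [m1 a_near] := locally_constant_cylinder x a_loc.
have [m2 b_near] := locally_constant_cylinder (shift (L i) x) b_loc.
pose m := (L i + maxn m2 k.+1)%N.
apply: filterS (cylinder_nbhs (maxn m1 m) x) => y xy.
have ay : a y = i by apply/a_near/(cylinder_le _ xy); rewrite leq_maxl.
have xy_m : cylinder m x y by apply: cylinder_le xy; rewrite leq_maxr.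
have shift_xy := cylinder_shift xy_m.
have b_shift : b (shift (L i) y) = b (shift (L i) x).
  by apply/b_near/(cylinder_le _ shift_xy); rewrite leq_maxl.
have shiftable_xy : shiftable y <-> shiftable x.
  have xy_i : cylinder (L i) x y by apply: cylinder_le xy_m; rewrite leq_addr.
  rewrite /shiftable ay -/i b_shift; split=> -[zx ->]; split=> // l li.
    by rewrite -xy_i // zx.
  by rewrite xy_i // zx.
rewrite /shift_or_reset ay -/i.
case: asboolP => /shiftable_xy; case: asboolP => // _ _.
by apply: shift_xy; rewrite leq_maxr.
Qed.

Lemma shift_chain_unique (i : nat -> 'I_N) (y y' : nat -> cantor_space) :
  (forall n, cylinder (L (i n)) (z (i n)) (y n)) ->
  (forall n, y n.+1 = shift (L (i n)) (y n)) ->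
  (forall n, cylinder (L (i n)) (z (i n)) (y' n)) ->
  (forall n, y' n.+1 = shift (L (i n)) (y' n)) ->
  y =1 y'.
Proof.
move=> zy yS zy' y'S.
suff bits k n : y n k = y' n k by move=> n; apply: funext => k.
elim/ltn_ind: k n => k IH n.
case: (ltnP k (L (i n))) => kL; first by rewrite zy // zy'.
have shift_bit (w : nat -> cantor_space) :
    w n.+1 = shift (L (i n)) (w n) -> w n k = w n.+1 (k - L (i n))%N.
  by move=> ->; rewrite /shift subnKC.
rewrite (shift_bit y (yS n)) (shift_bit y' (y'S n)); apply: IH.
by rewrite ltn_subrL L_gt0 (leq_trans (L_gt0 _) kL).
Qed.

Lemma shift_or_reset_periodic x :
  (forall n, shiftable (iter n step x)) ->
  exists2 M, (0 < M)%N & iter M step x = x.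
Proof.
move=> sh; pose y n := iter n step x; pose i n := a (y n).
have yS n : y n.+1 = shift (L (i n)) (y n).
  by rewrite /y iterS /shift_or_reset; case: asboolP => // /(_ (sh n)).
have zy n : cylinder (L (i n)) (z (i n)) (y n) by case: (sh n).
have colour n : b (z (i n.+1)) = i n.
  by rewrite -(b_cylinder (zy n.+1)) yS; case: (sh n).
have [d d_gt0 id] := @backward_orbit_periodic _ (b \o z) i colour.
have zy_d n : cylinder (L (i n)) (z (i n)) (y (n + d)%N) by rewrite -id.
have yS_d n : y (n.+1 + d)%N = shift (L (i n)) (y (n + d)%N).
  by rewrite -id addSn.
by exists d => //; rewrite -[RHS]/(y 0%N) (shift_chain_unique zy yS zy_d yS_d).
Qed.

Lemma shift_or_reset_finally_periodic x : finally_periodic step x.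
Proof.
have [[t sh]|nsh] :=
  pselect (exists t, forall n, shiftable (iter n step (iter t step x))).
  have [M M_gt0 ret] := shift_or_reset_periodic sh.
  exact: finally_periodic_of_return ret.
apply: (@finally_periodic_recurrent _ _ e) => t.
have [n nsh_n] : exists n, ~ shiftable (iter n step (iter t step x)).
  by apply/existsNP => sh; apply: nsh; exists t.
exists (n + t).+1; split; first by rewrite ltnS leq_addl.
exists (a (iter (n + t) step x)).
by rewrite iterS /shift_or_reset iterD; case: asboolP.
Qed.

End ShiftOrReset.

Lemma cantor_recolouring (N : nat) (a b : cantor_space -> 'I_N) :
  locally_constant a -> locally_constant b ->
  (forall i, exists x, a x = i) -> (forall i, exists y, b y = i) ->
  exists S : cantor_space -> cantor_space,
    [/\ endomorphism S, forall x, b (S x) = a x &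
        forall x, finally_periodic S x].
Proof.
move=> a_loc b_loc /choice [z a_z] /choice [e b_e].
have /choice [L zL] i : exists n, forall y, cylinder n.+1 (z i) y ->
    a y = i /\ b y = b (z i).
  have [m1 a_near] := locally_constant_cylinder (z i) a_loc.
  have [m2 b_near] := locally_constant_cylinder (z i) b_loc.
  exists (maxn m1 m2) => y /(cylinder_le (leqnSn _)) zy; split.
    by rewrite -[RHS]a_z; apply/a_near/(cylinder_le _ zy); rewrite leq_maxl.
  by apply/b_near/(cylinder_le _ zy); rewrite leq_maxr.
exists (shift_or_reset a b z e (fun i => (L i).+1)); split; first split.
- exact: shift_or_reset_continuous.
- by apply: shift_or_reset_surj => i y /zL [].
- exact: colour_shift_or_reset.
- by apply: shift_or_reset_finally_periodic => // i y /zL [].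
Qed.

Lemma locally_constant_comp (S T : topologicalType) (U : Type)
    (f : T -> U) (h : S -> T) :
  locally_constant f -> continuous h -> locally_constant (f \o h).
Proof. by move=> f_loc h_cts x; exact: h_cts x _ (f_loc (h x)). Qed.

Lemma closed_partition_index (T : topologicalType) (N : nat)
    (P : 'I_N -> set T) :
  (forall i, closed (P i)) -> (forall i j, i <> j -> P i `&` P j = set0) ->
  \bigcup_(i in [set: 'I_N]) P i = [set: T] ->
  exists2 part : T -> 'I_N,
    (forall x i, P i x <-> part x = i) & locally_constant part.
Proof.
move=> cP disj cover.
have /choice [part Ppart] x : exists i, P i x.
  by have : [set: T] x by []; rewrite -cover => -[i _]; exists i.
have partP x i : P i x <-> part x = i.
  split=> [Pix|<- //]; apply: contrapT => /nesym /disj /seteqP [+ _].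
  by move=> /(_ x) /=; apply.
exists part => // x.
have off : \forall y \near x, forall j, j != part x -> ~ P j y.
  apply: filter_forall => j; have [->|jx] := eqVneq j (part x).
    exact: nearW.
  apply: filterS (_ : nbhs x (~` P j)) => [y nPy _ //|].
  apply: open_nbhs_nbhs; split; first exact: closed_openC.
  by move=> /partP jx'; rewrite jx' eqxx in jx.
apply: filterS off => y off_y; have [//|ne] := eqVneq (part y) (part x).
by case: (off_y _ ne (Ppart y)).
Qed.

Lemma closed_map_inverse_continuous (S T : topologicalType) (f : S -> T)
    (g : T -> S) :
  cancel f g -> cancel g f -> (forall A, closed A -> closed (f @` A)) ->
  continuous g.
Proof.
move=> fK gK f_closed; apply/continuous_closedP => A cA.
suff -> : g @^-1` A = f @` A by exact: f_closed.
apply/seteqP; split=> [y Ay|_ [x Ax <-]]; first by exists (g y); rewrite ?gK.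
by rewrite /preimage /= fK.
Qed.

Lemma cantor_space_homeomorphic (R : realType) (K : pseudoPMetricType R) :
  hausdorff_space K -> is_cantor_set [set: K] ->
  exists (f : cantor_space -> K) (g : K -> cantor_space),
    [/\ continuous f, continuous g, cancel f g & cancel g f].
Proof.
move=> hK [_ tdK pfK cpK].
have cantor_likeK : cantor_like K.
  by split=> //; exact: totally_disconnected_zero_dimensional.
have [f [cf f_closed]] := homeomorphism_cantor_like cantor_likeK.
have [g fK gK] := @bijTT _ _ f.
by exists f, g; split=> //; exact: closed_map_inverse_continuous f_closed.
Qed.

Lemma conjugate_endomorphism (X Y : topologicalType) (f : X -> Y) (g : Y -> X)
    (S : X -> X) :
  continuous f -> continuous g -> cancel f g -> cancel g f ->
  endomorphism S -> endomorphism (f \o S \o g).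
Proof.
move=> cf cg fK gK [cS S_onto]; split.
  move=> y; apply: continuous_comp (cg y) _.
  exact: continuous_comp (cS _) (cf _).
by move=> y; have [x Sx] := S_onto (g y); exists (f x); rewrite /= fK Sx gK.
Qed.

Lemma conjugate_finally_periodic (X Y : Type) (f : X -> Y) (g : Y -> X)
    (S : X -> X) y :
  cancel f g -> cancel g f -> finally_periodic S (g y) ->
  finally_periodic (f \o S \o g) y.
Proof.
move=> fK gK [j [M [j_gt0 [M_gt0 per]]]]; exists j, M; split=> //; split=> //.
have iter_conj n x : iter n (f \o S \o g) (f x) = f (iter n S x).
  by elim: n => //= n ->; rewrite fK.
by rewrite -[y]gK !iter_conj per.
Qed.

(* [homeomorphism_cantor_like] is stated for pointed spaces. *)
Definition pointed_at (R : realType) (K : pseudoMetricType R) (k0 : K) : Type :=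
  K.
HB.instance Definition _ (R : realType) (K : pseudoMetricType R) (k0 : K) :=
  PseudoMetric.on (pointed_at k0).
HB.instance Definition _ (R : realType) (K : pseudoMetricType R) (k0 : K) :=
  isPointed.Build (pointed_at k0) k0.

Theorem theorem3p1 (R : realType) (K : pseudoMetricType R)
    (hK : hausdorff_space K) (cK : is_cantor_set [set: K])
    (T : K -> K) (hT : endomorphism T)
    (N : nat) (Ks : 'I_N -> set K)
    (cKs : forall i, is_cantor_set (Ks i))
    (disj : forall i j, i <> j -> Ks i `&` Ks j = set0)
    (cover : \bigcup_(i in [set: 'I_N]) Ks i = [set: K]) :
  exists Tt : K -> K, endomorphism Tt /\
    (forall (x : K) (i : 'I_N), Ks i (Tt x) <-> Ks i (T x)) /\
    (forall x : K, finally_periodic Tt x).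
Proof.
have [[k0 _] _ _ _] := cK; case: hT => cT T_onto.
have [f [g [cf cg fK gK]]] :=
  @cantor_space_homeomorphic R (pointed_at k0) hK cK.
have [part partP part_loc] : exists2 part : K -> 'I_N,
    (forall x i, Ks i x <-> part x = i) & locally_constant part.
  apply: closed_partition_index disj cover => i.
  by case: (cKs i) => _ _ _ /(compact_closed hK).
have part_onto (h : cantor_space -> K) : (forall y, exists x, h x = y) ->
    forall i, exists x, part (h x) = i.
  move=> h_onto i; have [[y Ky] _ _ _] := cKs i; have [x hx] := h_onto y.
  by exists x; apply/partP; rewrite hx.
have cTf : continuous (T \o f).
  by move=> x; exact: continuous_comp (cf x) (cT _).
have Tf_onto y : exists x, (T \o f) x = y.
  by have [x Tx] := T_onto y; exists (g x); rewrite /= gK.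
have f_onto y : exists x, f x = y by exists (g y); rewrite gK.
have [S [S_endo colour S_per]] :=
  cantor_recolouring (locally_constant_comp part_loc cTf)
    (locally_constant_comp part_loc cf)
    (part_onto _ Tf_onto) (part_onto _ f_onto).
exists (f \o S \o g); split; first exact: conjugate_endomorphism.
split=> [x i|x]; last exact: conjugate_finally_periodic.
by rewrite !partP; have /= -> := colour (g x); rewrite gK.
Qed.
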